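(* Let $S$ be a set of $9$ points of $PG(3,2)$ which is a strong blocking set, i.e. for every plane $\sigma$ of $PG(3,2)$ the points of $\sigma\cap S$ span $\sigma$. Then through each point $P\in S$ there pass exactly $2$ lines of $PG(3,2)$ entirely contained in $S$.
   Context: $PG(3,2)$ is the $3$-dimensional projective space over $\mathbb{F}_2$ (15 points, each line has 3 points, each plane has 7 points). A strong blocking set in $PG(3,2)$ is a set of points $S$ such that for every plane $\sigma$, the span $\langle \sigma\cap S\rangle$ equals $\sigma$. A strong blocking set of size $9$ (the minimum possible size) is called a minimal strong blocking set. *)

(* PG(3,2) modelled as the projective space of F_2^4:
   points = nonzero row vectors of 'rV['F_2]_4 (over F_2 each 1-dim subspace
   has exactly one nonzero vector). Subspaces of PG(3,2) are row spaces. *)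
From mathcomp Require Import all_boot all_order all_algebra.
Set Implicit Arguments. Unset Strict Implicit. Unset Printing Implicit Defensive.
Import GRing.Theory.
Local Open Scope ring_scope.

Definition vec := 'rV['F_2]_4.

Definition ppoints (m : nat) (U : 'M['F_2]_(m, 4)) : {set vec} :=
  [set x : vec | (x != 0) && (x <= U)%MS].

Definition is_plane (U : 'M['F_2]_4) : bool := \rank U == 3%N.

Definition is_line (U : 'M['F_2]_4) : bool := \rank U == 2%N.

Definition pspan (A : {set vec}) : 'M['F_2]_4 := (\sum_(x in A) <<x>>)%MS.

Definition strong_blocking (S : {set vec}) : Prop :=
  forall U : 'M['F_2]_4, is_plane U ->
    (pspan (S :&: ppoints U) == U)%MS.

Definition lines_through_in (P : vec) (S : {set vec}) : {set {set vec}} :=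
  [set L : {set vec} | [exists U : 'M['F_2]_4, is_line U && (L == ppoints U)]
                       && (P \in L) && (L \subset S)].

Definition pg32_points : {set vec} := [set x : vec | x != 0].

From mathcomp Require Import all_boot all_order all_algebra.
Set Implicit Arguments. Unset Strict Implicit. Unset Printing Implicit Defensive.
Import GRing.Theory.
Local Open Scope ring_scope.

(* Let T be the 6 points outside S. If two disjoint pairs {a, b}, {c, d} of T had
   the same sum, then a, b, c, d would be the four points of the plane <a, b, c>
   off the line <a + b, a + c>, so that plane would meet S inside a line. Hence the
   15 sums of pairs of T are distinct nonzero vectors, i.e. every point is the sum
   of exactly one pair of T: through each point P exactly one line has its two
   other points in T. For P in S, the lines through P split the 14 other points
   into pairs {Y, P + Y}; if k of them lie in S, counting the 8 points of S other
   than P gives 2k + (7 - k - 1) = 8, so k = 2. *)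

Lemma F2_cases (k : 'F_2) : k = 0 \/ k = 1.
Proof. by case: k => [[|[|//]] ?]; [left | right]; apply: val_inj. Qed.

Lemma addr_eql (V : zmodType) (x y : V) : (x + y == x) = (y == 0).
Proof. by rewrite -[LHS]subr_eq0 addrAC subrr add0r. Qed.

Lemma addr_eqr (V : zmodType) (x y : V) : (x + y == y) = (x == 0).
Proof. by rewrite addrC addr_eql. Qed.

Lemma sub_addsmx_split (F : fieldType) k m1 m2 n (x : 'M[F]_(k, n))
    (A : 'M_(m1, n)) (B : 'M_(m2, n)) :
  (x <= A + B)%MS -> exists2 u, (u <= A)%MS & (x - u <= B)%MS.
Proof.
case/sub_addsmxP=> -[u v] ->; exists (u *m A); first exact: submxMl.
by rewrite addrC addKr submxMl.
Qed.

Section RowVectorsF2.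

Variable n : nat.
Implicit Types a b c x y : 'rV['F_2]_n.

Lemma addrr_F2 x : x + x = 0.
Proof. by rewrite -mulr2n -scaler_nat (_ : 2%:R = 0) ?scale0r //; apply/val_inj. Qed.

Lemma oppr_F2 x : - x = x.
Proof. by apply/eqP; rewrite eq_sym -subr_eq0 opprK addrr_F2. Qed.

Lemma addKr_F2 x y : x + (x + y) = y.
Proof. by rewrite -[X in X + _]oppr_F2 addKr. Qed.

Lemma addr_eq0_F2 x y : (x + y == 0) = (x == y).
Proof. by rewrite -[y in _ + y]oppr_F2 subr_eq0. Qed.

Lemma submx_rV_F2 x y : (x <= y)%MS -> x = 0 \/ x = y.
Proof.
by case/sub_rVP=> k ->; case: (F2_cases k) => ->; rewrite ?scale0r ?scale1r; [left | right].
Qed.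

Lemma sub_adds3_F2 a b c x : (x <= a + b + c)%MS ->
  [\/ x = 0, x \in [set a; b; c; a + b + c] | (x <= (a + b)%R + (a + c)%R)%MS].
Proof.
case/sub_addsmx_split=> u /sub_addsmx_split [v /submx_rV_F2 hv /submx_rV_F2 hu].
move/submx_rV_F2=> hx.
have -> : x = v + (u - v) + (x - u) by rewrite addrC [v + _]addrC !subrK.
have bc : ((b + c)%R <= (a + b)%R + (a + c)%R)%MS.
  by rewrite -[b + c]add0r -(addrr_F2 a) -addrACA addmx_sub_adds.
case: hx => ->; case: hu => ->; case: hv => ->; rewrite ?(add0r, addr0);
  first [by apply: Or31 | by apply: Or33; rewrite ?addsmxSl ?addsmxSr
        | by apply: Or32; rewrite !inE eqxx ?orbT].
Qed.

End RowVectorsF2.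

Lemma card_submx_rV m (U : 'M['F_2]_(m, 4)) :
  #|[set x : vec | (x <= U)%MS]| = (2 ^ \rank U)%N.
Proof.
have -> : [set x : vec | (x <= U)%MS] = [set u *m row_base U | u : 'rV_(\rank U)].
  apply/setP=> x; rewrite inE; apply/idP/imsetP.
    by rewrite -(eq_row_base U) => /submxP [u ->]; exists u.
  by case=> u _ ->; rewrite -(eq_row_base U) submxMl.
rewrite card_imset; last exact: row_free_inj (row_base_free U).
by rewrite card_mx card_Fp // mul1n.
Qed.

Lemma card_ppoints m (U : 'M['F_2]_(m, 4)) : #|ppoints U| = (2 ^ \rank U).-1.
Proof.
rewrite -card_submx_rV [in RHS](cardsD1 0) inE sub0mx /=.
by apply: eq_card => x; rewrite !inE.
Qed.

Lemma card_pg32_points : #|pg32_points| = 15%N.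
Proof.
rewrite -[pg32_points](_ : ppoints (1%:M : 'M_4) = _) ?card_ppoints ?mxrank1 //.
by apply/setP=> x; rewrite !inE submx1 andbT.
Qed.

Lemma pspan_sub (A : {set vec}) m (M : 'M_(m, 4)) :
  {subset A <= [pred x : vec | (x <= M)%MS]} -> (pspan A <= M)%MS.
Proof. by move=> sAM; apply/sumsmx_subP=> x /sAM; rewrite genmxE. Qed.

Definition pline (P Y : vec) : {set vec} := [set P; Y; P + Y].

Lemma card_pline P Y : P != 0 -> Y != 0 -> P != Y -> #|pline P Y| = 3%N.
Proof.
move=> P0 Y0 PY; rewrite /pline setUC cardsU1 cards2 PY !inE.
by rewrite addr_eql addr_eqr (negbTE P0) (negbTE Y0).
Qed.

Lemma pline_addr P Y : pline P (P + Y) = pline P Y.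
Proof. by apply/setP=> z; rewrite !inE addKr_F2 orbAC. Qed.

Lemma pline_sub m (U : 'M_(m, 4)) P Y : P \in ppoints U -> Y \in ppoints U ->
  P != Y -> pline P Y \subset ppoints U.
Proof.
rewrite !inE => /andP [P0 PU] /andP [Y0 YU] PY.
apply/subsetP=> z; rewrite !inE => /orP [/orP [] | ] /eqP ->; rewrite ?P0 ?Y0 //.
by rewrite addr_eq0_F2 PY addmx_sub.
Qed.

Lemma pline_is_line P Y : P != 0 -> Y != 0 -> P != Y ->
  [exists U : 'M_4, is_line U && (pline P Y == ppoints U)].
Proof.
move=> P0 Y0 PY; apply/existsP; exists (P + Y)%MS.
have sub : pline P Y \subset ppoints (P + Y)%MS.
  by apply: pline_sub; rewrite // inE ?P0 ?Y0 ?addsmxSl ?addsmxSr.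
have rle : (\rank (P + Y)%MS <= 2)%N.
  by apply: leq_trans (mxrank_adds_leqif P Y).1 _; rewrite !rank_rV P0 Y0.
move: rle (subset_leq_card sub).
rewrite /is_line eqEcard sub !card_ppoints card_pline //.
by case: (\rank _) => [|[|[|]]].
Qed.

Lemma line_ppoints_pline (U : 'M_4) P : is_line U -> P \in ppoints U ->
  exists2 Y, Y \in ppoints U :\ P & ppoints U = pline P Y.
Proof.
move=> /eqP rU PU; have c3 : #|ppoints U| = 3%N by rewrite card_ppoints rU.
have /card_gt0P [Y YU] : (0 < #|ppoints U :\ P|)%N.
  by move: c3; rewrite (cardsD1 P) PU add1n => -[->].
exists Y => //; move: YU; rewrite in_setD1 => /andP [YP YU].
have [P0 Y0] : P != 0 /\ Y != 0 by move: PU YU; rewrite !inE => /andP [-> _] /andP [].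
by apply/esym/eqP; rewrite eqEcard pline_sub 1?eq_sym // c3 card_pline // eq_sym.
Qed.

Definition line_partners (S : {set vec}) (P : vec) : {set vec} :=
  [set Y in S | (Y != P) && (P + Y \in S)].

Section LinesThrough.

Variables (S : {set vec}) (P : vec).
Hypotheses (S0 : 0 \notin S) (PS : P \in S).

Local Notation A := (line_partners S P).

Lemma nonzero_in_S Y : Y \in S -> Y != 0.
Proof. by apply: contraTneq => ->. Qed.

Lemma line_partners_addr Y : Y \in A -> P + Y \in A.
Proof.
rewrite !inE addKr_F2 => /andP [YS /andP [_ ->]]; rewrite YS addr_eql andbT.
exact: nonzero_in_S.
Qed.

Lemma lines_through_in_partners : lines_through_in P S = pline P @: A.
Proof.
apply/setP=> L; apply/idP/imsetP.
  rewrite inE => /andP [/andP [/existsP [U /andP [lU /eqP LU]] PL] LS].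
  rewrite LU in PL LS *; have [Y] := line_ppoints_pline lU PL.
  rewrite in_setD1 => /andP [YP _] LE; exists Y => //.
  by rewrite LE in LS; rewrite inE YP !(subsetP LS) // !inE eqxx ?orbT.
case=> Y; rewrite inE => /andP [YS /andP [YP PYS]] ->.
rewrite inE pline_is_line ?nonzero_in_S 1?eq_sym //= !inE eqxx /=.
by apply/subsetP=> z; rewrite !inE => /orP [/orP [] | ] /eqP ->.
Qed.

Lemma card_line_partners : #|A| = (2 * #|lines_through_in P S|)%N.
Proof.
rewrite lines_through_in_partners -sum1_card (partition_big_imset (pline P)) /=.
rewrite mulnC -sum_nat_const; apply: eq_bigr => _ /imsetP [Y YA ->].
have YP : Y != P + Y by rewrite eq_sym addr_eqr nonzero_in_S.
rewrite (eq_bigl (mem [set Y; P + Y])) ?sum1_card ?cards2 ?YP // => Z.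
apply/andP/set2P=> [[ZA /eqP eZ] | [->|->]]; last 2 first.
- by rewrite YA eqxx.
- by rewrite line_partners_addr // pline_addr eqxx.
have : Z \in pline P Y by rewrite -eZ !inE eqxx orbT.
move: ZA; rewrite !inE => /andP [_ /andP [/negbTE -> _]] /=.
by case/orP=> /eqP; [left | right].
Qed.

End LinesThrough.

Section StrongBlocking.

Variable S : {set vec}.
Hypothesis S_strong : strong_blocking S.

Local Notation T := (pg32_points :\: S).

Lemma strong_blocking_no_quadrangle a b c d :
  uniq [:: a; b; c; d] -> {subset [:: a; b; c; d] <= T} -> a + b != c + d.
Proof.
move=> abcd_uniq abcdT; apply/eqP=> abcd.
have dE : d = a + b + c by rewrite abcd addrC addKr_F2.
set U := (a + b + c)%MS.
have abcdU : [:: a; b; c; d] \subset ppoints U.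
  apply/subsetP=> x x4; have := abcdT x x4; rewrite !inE => /andP [_ ->] /=.
  move: x4; rewrite !inE => /or4P [] /eqP ->; rewrite ?dE.
  - exact: submx_trans (addsmxSl a b) (addsmxSl _ c).
  - exact: submx_trans (addsmxSr a b) (addsmxSl _ c).
  - exact: addsmxSr.
  - exact: addmx_sub_adds (addmx_sub_adds (submx_refl a) (submx_refl b)) (submx_refl c).
have rU : \rank U = 3%N.
  have le3 : (\rank U <= 3)%N.
    apply: leq_trans (mxrank_adds_leqif _ _).1 _.
    apply: (@leq_add _ _ 2 1); last exact: rank_leq_row.
    apply: leq_trans (mxrank_adds_leqif _ _).1 _.
    exact: leq_add (rank_leq_row a) (rank_leq_row b).
  move: le3 (subset_leq_card abcdU).
  by rewrite card_ppoints (card_uniqP abcd_uniq); case: (\rank U) => [|[|[|[|]]]].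
have sW : (pspan (S :&: ppoints U) <= (a + b)%R + (a + c)%R)%MS.
  apply: pspan_sub => x; rewrite inE => /andP [xS xU]; move: (xU); rewrite inE.
  case/andP=> x0 /sub_adds3_F2 [/eqP | | //]; first by rewrite (negbTE x0).
  rewrite -dE => x4; have := abcdT x; rewrite !inE xS.
  by move: x4; rewrite !inE -!orbA => x4 /(_ x4).
have U_plane : is_plane U by rewrite /is_plane rU.
have := mxrankS sW; rewrite (eqmx_rank (S_strong U_plane)) rU.
apply/negP; rewrite -ltnNge ltnS.
apply: leq_trans (mxrank_adds_leqif _ _).1 _.
exact: leq_add (rank_leq_row _) (rank_leq_row _).
Qed.

Definition pair_sum (E : {set vec}) : vec := \sum_(x in E) x.

Lemma pair_sum2 a b : a != b -> pair_sum [set a; b] = a + b.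
Proof. by move=> ab; rewrite /pair_sum big_setU1 ?big_set1 ?inE. Qed.

Lemma pair_sum_inj :
  {in [set E : {set vec} | E \subset T & #|E| == 2%N] &, injective pair_sum}.
Proof.
move=> E1 E2; rewrite !inE => /andP [sE1 /cards2P [a [b [ab E1ab]]]].
case/andP=> sE2 /cards2P [c [d [cd E2cd]]]; subst E1 E2; rewrite !pair_sum2 // => abcd.
have [ac|ac] := eqVneq a c; first by subst c; rewrite (addrI _ abcd).
have [ad|ad] := eqVneq a d.
  by subst d; rewrite [c + a]addrC in abcd; rewrite (addrI _ abcd) setUC.
have bc : b != c.
  by apply: contraNneq ad => bc; rewrite bc addrC in abcd; rewrite (addrI _ abcd).
have bd : b != d by apply: contraNneq ac => bd; rewrite bd in abcd; rewrite (addIr _ abcd).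
have abcdT : {subset [:: a; b; c; d] <= T}.
  move=> x; rewrite !in_cons in_nil orbF => /or4P [] /eqP ->;
    first [by apply: (subsetP sE1); rewrite !inE eqxx ?orbT
          | by apply: (subsetP sE2); rewrite !inE eqxx ?orbT].
have abcd_uniq : uniq [:: a; b; c; d] by rewrite /= !inE !negb_or ab ac ad bc bd cd.
by move: (strong_blocking_no_quadrangle abcd_uniq abcdT); rewrite abcd eqxx.
Qed.

Hypotheses (S_sub : S \subset pg32_points) (S_card : #|S| = 9%N).

Lemma card_compl : #|T| = 6%N.
Proof. by rewrite cardsD (setIidPr S_sub) card_pg32_points S_card. Qed.

Lemma pair_sum_onto P : P \in pg32_points ->
  exists a b, [/\ a != b, [set a; b] \subset T & a + b = P].
Proof.
move=> P_pt; set D := [set E : {set vec} | E \subset T & #|E| == 2%N].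
have sumD : pair_sum @: D \subset pg32_points.
  apply/subsetP=> y /imsetP [E]; rewrite inE => /andP [_ /cards2P [a [b [ab ->]]]] ->.
  by rewrite pair_sum2 // inE addr_eq0_F2.
have imD : pair_sum @: D = pg32_points.
  apply/eqP; rewrite eqEcard sumD card_in_imset; last exact: pair_sum_inj.
  by rewrite cards_draws card_compl card_pg32_points.
have /imsetP [E] : P \in pair_sum @: D by rewrite imD.
rewrite inE => /andP [sE /cards2P [a [b [ab EE]]]] ->.
by exists a, b; subst E; rewrite pair_sum2.
Qed.

Lemma card_shift_compl_meet P : P \in pg32_points ->
  #|[set P + y | y in T] :&: T| = 2%N.
Proof.
move=> P_pt; have [a [b [ab sabT abP]]] := pair_sum_onto P_pt.
have [aT bT] : a \in T /\ b \in T by split; apply: (subsetP sabT); rewrite !inE eqxx ?orbT.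
suff -> : [set P + y | y in T] :&: T = [set a; b] by rewrite cards2 ab.
apply/setP=> z; rewrite inE; apply/andP/set2P=> [[/imsetP [y yT ->] PyT] | [->|->]].
- have Py_y : P + y != y by rewrite addr_eqr; move: P_pt; rewrite inE.
  have : [set P + y; y] = [set a; b].
    apply: pair_sum_inj; rewrite ?inE ?cards2 ?Py_y ?ab ?sabT ?andbT //.
      by apply/subsetP=> x /set2P [] ->.
    by rewrite !pair_sum2 // -addrA addrr_F2 addr0.
  by move/setP/(_ (P + y)); rewrite set21 => /esym /set2P.
- by split=> //; apply/imsetP; exists b; rewrite // -abP -addrA addrr_F2 addr0.
- by split=> //; apply/imsetP; exists a; rewrite // -abP addrC addrA addrr_F2 add0r.
Qed.

Lemma card_line_partners_minimal P : P \in S -> #|line_partners S P| = 4%N.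
Proof.
move=> PS; have P0 : P != 0 by move: (subsetP S_sub P PS); rewrite inE.
set sT := [set P + y | y in T].
have sTE Y : (Y \in sT) = (P + Y \in T).
  apply/imsetP/idP=> [[y yT ->] | PYT]; first by rewrite addKr_F2.
  by exists (P + Y); rewrite ?addKr_F2.
have eA : line_partners S P = (S :\ P) :\: sT.
  apply/setP=> Y; rewrite !inE sTE !inE addr_eq0_F2 negb_and negbK [P == Y]eq_sym.
  by case: (Y == P); rewrite /= ?andbF ?orbF // andbC.
have eM : (S :\ P) :&: sT = sT :\: T.
  apply/setP=> Y; rewrite !inE sTE !inE addr_eq0_F2 [P == Y]eq_sym.
  have [->|YP] := eqVneq Y P; first by rewrite !andbF.
  have [->|Y0] := eqVneq Y 0; first by rewrite addr0 PS !andbF.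
  by case: (Y \in S).
have card_sT : #|sT| = 6%N by rewrite card_imset ?card_compl //; apply: addrI.
have card_SP : #|S :\ P| = 8%N by move: S_card; rewrite (cardsD1 P) PS => -[].
have := cardsID sT (S :\ P); rewrite eM -eA card_SP.
have := cardsID T sT; rewrite card_sT card_shift_compl_meet ?(subsetP S_sub) //.
move=> /eqP; rewrite -[6%N]/(2 + 4)%N eqn_add2l => /eqP ->.
by move/eqP; rewrite -[8%N]/(4 + 4)%N eqn_add2l => /eqP.
Qed.

End StrongBlocking.

Close Scope ring_scope.

Theorem lemma2p2 (S : {set vec}) :
  S \subset pg32_points -> #|S| = 9 -> strong_blocking S ->
  forall P, P \in S -> #|lines_through_in P S| = 2.
Proof.
move=> S_sub S_card S_strong P PS.
have S0 : (0 : vec)%R \notin S by apply/negP=> /(subsetP S_sub); rewrite inE eqxx.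
apply/eqP; rewrite -(eqn_pmul2l (isT : 0 < 2)) -card_line_partners //.
by rewrite (card_line_partners_minimal S_strong S_sub S_card PS).
Qed.
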